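(* Let $(T_k)_{k\in\mathbb{N}}$ be i.i.d. with law $\mathcal{T}$ and let $(R_k)_{k\in\mathbb{N}}$ be an independent sequence of independent (not necessarily identically distributed) $[0,\infty]$-valued random variables with $\prod_{k=1}^\infty\mathsf{P}(R_k<T_k)=0$, and let $\tilde T$ be defined a.s. by $\tilde T=R_1+\cdots+R_{k-1}+T_k$ on $\{R_1<T_1,\ldots,R_{k-1}<T_{k-1},T_k\leq R_k\}$, $k\in\mathbb{N}$. If $\overline{F}$ is supermultiplicative then $\mathsf{P}(\tilde T>t)\leq\overline{F}(t)$ for all $t\in[0,\infty)$. If $\overline{F}$ is submultiplicative and additionally $\sum_{l=1}^kR_l\uparrow\infty$ a.s. as $k\to\infty$, then $\mathsf{P}(\tilde T>t)\geq\overline{F}(t)$ for all $t\in[0,\infty)$.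
   Context: Standing assumptions: $\mathcal{T}$ is a probability law on the Borel sets of $[0,\infty]$ with $\mathcal{T}((0,\infty])>0$ and $\inf\mathrm{supp}(\mathcal{T})=0$; $\overline{F}(t):=\mathcal{T}((t,\infty])$ for $t\in[0,\infty)$. $\overline{F}$ is supermultiplicative if $\overline{F}(x+y)\geq\overline{F}(x)\overline{F}(y)$ for all $x,y\in[0,\infty)$, submultiplicative if the reverse inequality holds for all $x,y$. *)

From HB Require Import structures.
From mathcomp Require Import all_boot all_order all_algebra.
From mathcomp Require Import all_classical all_reals all_analysis measurable_realfun.
Set Implicit Arguments. Unset Strict Implicit. Unset Printing Implicit Defensive.
Import Order.TTheory GRing.Theory Num.Theory.
Local Open Scope classical_set_scope.
Local Open Scope ring_scope.
Local Open Scope ereal_scope.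

Section Defs.
Context {d : measure_display} {Omega : measurableType d} {R : realType}.

Definition mutual_indep (P : probability Omega R) (X : nat -> Omega -> \bar R) :=
  forall (J : seq nat) (B : nat -> set (\bar R)), uniq J ->
    (forall j, measurable (B j)) ->
    P (\bigcap_(j in [set` J]) (X j @^-1` B j)) = \prod_(j <- J) P (X j @^-1` B j).

(* independence of the two sequences X and Y (i.e. of sigma(X_k, k) and
   sigma(Y_k, k)), tested on the generating pi-system of finite cylinders *)
Definition indep_seqs (P : probability Omega R) (X Y : nat -> Omega -> \bar R) :=
  forall (J1 J2 : seq nat) (B C : nat -> set (\bar R)),
    (forall j, measurable (B j)) -> (forall j, measurable (C j)) ->
    P (\bigcap_(j in [set` J1]) (X j @^-1` B j) `&` \bigcap_(j in [set` J2]) (Y j @^-1` C j))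
    = P (\bigcap_(j in [set` J1]) (X j @^-1` B j)) * P (\bigcap_(j in [set` J2]) (Y j @^-1` C j)).

Definition stop_event (T Rs : nat -> Omega -> \bar R) (k : nat) : set Omega :=
  [set w | (forall l, (l < k)%N -> Rs l w < T l w) /\ T k w <= Rs k w].

(* Ttilde = R_0 + ... + R_{k-1} + T_k on stop_event k (these events are
   pairwise disjoint); Ttilde := 0 off their union (a null set). *)
Definition Ttilde (T Rs : nat -> Omega -> \bar R) (w : Omega) : \bar R :=
  \sum_(0 <= k <oo) ((\1_(stop_event T Rs k) w)%:E * (\sum_(l < k) Rs l w + T k w)).

End Defs.

Section Law.
Context {R : realType}.

Definition Fbar (mu : probability (\bar R) R) (t : R) : \bar R :=
  mu [set x : \bar R | t%:E < x].

Definition supermultiplicative (mu : probability (\bar R) R) :=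
  forall x y : R, (0 <= x)%R -> (0 <= y)%R -> Fbar mu x * Fbar mu y <= Fbar mu (x + y).

Definition submultiplicative (mu : probability (\bar R) R) :=
  forall x y : R, (0 <= x)%R -> (0 <= y)%R -> Fbar mu (x + y) <= Fbar mu x * Fbar mu y.

Definition msupp (mu : probability (\bar R) R) : set (\bar R) :=
  [set x | forall U : set (\bar R), open U -> U x -> 0 < mu U].
End Law.

From HB Require Import structures.
From mathcomp Require Import all_boot all_order all_algebra.
From mathcomp Require Import all_classical all_reals all_analysis measurable_realfun.
From mathcomp Require Import lra.
Set Implicit Arguments. Unset Strict Implicit. Unset Printing Implicit Defensive.
Import Order.TTheory GRing.Theory Num.Theory.
Local Open Scope classical_set_scope.
Local Open Scope ring_scope.
Local Open Scope ereal_scope.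

(* Write B_n := survive_above n, the event that R k < T k for all k < n and
   Rsum n + T n > t.  It is the disjoint union of stop_above n, where the walk
   stops at round n (T n <= R n, and then Ttilde = Rsum n + T n > t), and
   pass_above n, where R n < T n.  The past (survive n, Rsum n, R n) is
   independent of (T n, T n.+1), and conditionally on Rsum n = s, R n = r with
   s + r <= t we have P (B_(n+1)) = Fbar r * Fbar (t - s - r) against
   P (pass_above n) = Fbar (t - s); for s + r > t the two agree.  So under
   supermultiplicativity the sequence
     P (stop_above 0) + ... + P (stop_above (n-1)) + P (B_n)
   decreases from P (B_0) = Fbar t, and under submultiplicativity it
   increases.  Its first part tends to P (Ttilde > t), while
   0 <= P (B_n) <= P (survive n) = prod_(k < n) P (R k < T k) --> 0. *)

Local Ltac measurable_coordinates :=
  repeat first [exact: measurable_cst | exact: measurable_id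
    | exact: measurable_fst | exact: measurable_snd
    | apply: (measurableT_comp measurable_fst) | apply: (measurableT_comp measurable_snd)
    | apply: emeasurable_funD].

Section measurable_ereal_sets.
Context (R : realType) (d : measure_display) (X : measurableType d).
Implicit Types f g : X -> \bar R.

Lemma measurable_set_lte f g : measurable_fun setT f -> measurable_fun setT g ->
  measurable [set x | f x < g x].
Proof. by move=> mf mg; rewrite -[X in measurable X]setTI; exact: measurable_lte. Qed.

Lemma measurable_set_lee f g : measurable_fun setT f -> measurable_fun setT g ->
  measurable [set x | f x <= g x].
Proof. by move=> mf mg; rewrite -[X in measurable X]setTI; exact: measurable_lee. Qed.

Lemma measurable_set_eqe f g : measurable_fun setT f -> measurable_fun setT g ->
  measurable [set x | f x = g x].
Proof. by move=> mf mg; rewrite -[X in measurable X]setTI; exact: measurable_eqe. Qed.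

End measurable_ereal_sets.

Section independent_pair.
Context (R : realType) (d : measure_display) (Omega : measurableType d)
  (P : probability Omega R) (d1 d2 : measure_display)
  (X1 : measurableType d1) (X2 : measurableType d2)
  (Z1 : Omega -> X1) (Z2 : Omega -> X2).
Hypothesis mZ1 : measurable_fun setT Z1.
Hypothesis mZ2 : measurable_fun setT Z2.
Hypothesis Z12_indep : forall A B, measurable A -> measurable B ->
  P (Z1 @^-1` A `&` Z2 @^-1` B) = P (Z1 @^-1` A) * P (Z2 @^-1` B).

Let Z1f : {mfun Omega >-> X1} := HB.pack Z1 (isMeasurableFun.Build _ _ _ _ _ mZ1).
Let Z2f : {mfun Omega >-> X2} := HB.pack Z2 (isMeasurableFun.Build _ _ _ _ _ mZ2).
Let mZ : measurable_fun setT (fun w => (Z1 w, Z2 w)) := measurable_fun_pair mZ1 mZ2.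
Let Zf : {mfun Omega >-> (X1 * X2)%type} :=
  HB.pack (fun w => (Z1 w, Z2 w)) (isMeasurableFun.Build _ _ _ _ _ mZ).

(* By independence the joint law is the product of the marginals. *)
Lemma indep_pair_preimageE E : measurable E ->
  P ((fun w => (Z1 w, Z2 w)) @^-1` E) =
  \int[distribution P Z1f]_z distribution P Z2f (xsection E z).
Proof.
move=> mE.
have prod_law : (distribution P Z1f \x distribution P Z2f) E = distribution P Zf E.
  by apply: product_measure_unique mE => A B mA mB; exact: Z12_indep.
by rewrite [LHS](_ : _ = distribution P Zf E) // -prod_law.
Qed.

Lemma le_indep_pair_preimage E E' : measurable E -> measurable E' ->
  (forall z, P (Z2 @^-1` ((fun y => (z, y)) @^-1` E)) <=
             P (Z2 @^-1` ((fun y => (z, y)) @^-1` E'))) ->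
  P ((fun w => (Z1 w, Z2 w)) @^-1` E) <= P ((fun w => (Z1 w, Z2 w)) @^-1` E').
Proof.
move=> mE mE' le_sections; rewrite !indep_pair_preimageE //.
apply: ge0_le_integral => //.
- exact: measurable_fun_xsection mE.
- exact: measurable_fun_xsection mE'.
- by move=> z _; rewrite /distribution /pushforward /= !xsectionE.
Qed.

End independent_pair.

Section independent_events.
Context (R : realType) (d : measure_display) (Omega : measurableType d)
  (P : probability Omega R).

Lemma indep_dynkin (A : set Omega) : measurable A ->
  dynkin [set B | measurable B /\ P (A `&` B) = P A * P B].
Proof.
move=> mA; have PAfin := fin_num_measure P A mA; split.
- by split; [exact: measurableT | rewrite setIT probability_setT mule1].
- move=> B [mB indAB]; split; first exact: measurableC.
  rewrite probability_setC // -setDE measureD //; last by rewrite ltey_eq PAfin.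
  transitivity (P A - P A * P B); first by congr (_ - _).
  by rewrite muleBr ?mule1 // fin_num_measure.
- move=> F trivF indF; split.
    by apply: bigcup_measurable => k _; case: (indF k).
  rewrite setI_bigcupr measure_bigcup //; last 2 first.
  + by move=> i _; apply: measurableI => //; case: (indF i).
  + exact: trivIset_setIl.
  rewrite measure_bigcup //; last by move=> i _; case: (indF i).
  rewrite -(fineK PAfin) -nneseriesZl //.
  by apply: eq_eseriesr => i _; rewrite fineK //; case: (indF i).
Qed.

Lemma probability_preimageI_setT d' (Y : measurableType d') (X : Omega -> Y)
    (F G : set Y) :
  F = setT \/ G = setT -> P (X @^-1` (F `&` G)) = P (X @^-1` F) * P (X @^-1` G).
Proof.
by case=> ->; rewrite ?setTI ?setIT preimage_setT probability_setT ?mul1e ?mule1.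
Qed.

End independent_events.

Section tail_splitting.
Context (R : realType) (mu : probability (\bar R) R) (t : R).
Hypothesis mu_neg : mu [set x : \bar R | x < 0] = 0.

Definition Fbar_split (b c : \bar R) :=
  b = c \/ exists x y : R, [/\ (0 <= x)%R, (0 <= y)%R,
    b = Fbar mu x * Fbar mu y & c = Fbar mu (x + y)].

Lemma Fbar_split_super b c : supermultiplicative mu -> Fbar_split b c -> b <= c.
Proof. by move=> super [->|[x [y [x0 y0 -> ->]]]]; last exact: super. Qed.

Lemma Fbar_split_sub b c : submultiplicative mu -> Fbar_split b c -> c <= b.
Proof. by move=> sub [->|[x [y [x0 y0 -> ->]]]]; last exact: sub. Qed.

Lemma probability_ge0_set : mu [set x : \bar R | 0 <= x] = 1.
Proof.
have -> : [set x : \bar R | 0 <= x] = ~` [set x | x < 0].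
  by apply/seteqP; split => x /=; rewrite leNgt => /negP.
rewrite probability_setC ?mu_neg ?sube0 //.
by apply: measurable_set_lte; measurable_coordinates.
Qed.

Lemma Fbar_split_tails (s r : \bar R) : 0 <= s -> 0 <= r ->
  Fbar_split (mu [set x | r < x] * mu [set y | t%:E < s + r + y])
             (mu [set x | r < x /\ t%:E < s + x]).
Proof.
move=> s0 r0; have [tsr|srt] := ltP t%:E (s + r).
  have mabove : measurable [set y | t%:E < s + r + y].
    by apply: measurable_set_lte; measurable_coordinates.
  have -> : mu [set y | t%:E < s + r + y] = 1.
    apply/le_anti/andP; split; first exact: probability_le1.
    rewrite -probability_ge0_set le_measure ?inE //.
      by apply: measurable_set_lee; measurable_coordinates.
    by move=> y /= y0; rewrite (lt_le_trans tsr) // leeDl.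
  left; rewrite mule1; congr (mu _); apply/seteqP; split => x /=; last by case.
  by move=> rx; split => //; rewrite (lt_le_trans tsr) // leeD2l // ltW.
right; case: s s0 srt => [s| |] //= s0; last by case: r r0.
case: r r0 => [r| |] //= r0 srt; rewrite !lee_fin in s0 r0 srt.
exists r, (t - s - r)%R; split => //; first by rewrite subr_ge0 lerBrDr addrC.
all: rewrite /Fbar; try congr (_ * mu _); try congr (mu _).
all: apply/seteqP; split => -[z| |] //=; rewrite -?EFinD ?lte_fin ?addey ?ltry //.
all: try by rewrite [_ < -oo]ltNge leNye => -[].
all: by [move=> ?; lra | case=> ? ?; lra | move=> ?; split; lra].
Qed.

End tail_splitting.

Section cylinders.
Context (R : realType) (d : measure_display) (Omega : measurableType d)
  (P : probability Omega R) (T Rs : nat -> Omega -> \bar R).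
Hypothesis mT : forall k, measurable_fun setT (T k).
Hypothesis mRs : forall k, measurable_fun setT (Rs k).
Hypothesis indT : mutual_indep P T.
Hypothesis indR : mutual_indep P Rs.
Hypothesis indTR : indep_seqs P T Rs.

Definition setT_off (I : set nat) (N : nat) (B : nat -> set (\bar R)) :=
  forall j, ~ (I j /\ (j < N)%N) -> B j = setT.

Lemma setT_offW I J N M B : I `<=` J -> (N <= M)%N ->
  setT_off I N B -> setT_off J M B.
Proof.
move=> IJ NM BT j notJj; apply: BT => -[Ij jN]; apply: notJj; split.
- exact: IJ.
- exact: leq_trans jN NM.
Qed.

Lemma setT_offI I N B B' : setT_off I N B -> setT_off I N B' ->
  setT_off I N (fun j => B j `&` B' j).
Proof. by move=> BT B'T j notIj; rewrite BT // B'T // setIT. Qed.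

Lemma setT_off_disjoint I J N M B B' : I `&` J = set0 ->
  setT_off I N B -> setT_off J M B' -> forall j, B j = setT \/ B' j = setT.
Proof.
move=> IJ0 BT B'T j; have [[Ij jN]|notIj] := pselect (I j /\ (j < N)%N).
- right; apply: B'T => -[Jj _].
  by have : (I `&` J) j by []; rewrite IJ0.
- by left; exact: BT.
Qed.

Lemma bigcap_preimage_iota (X : nat -> Omega -> \bar R) N B : setT_off setT N B ->
  \bigcap_j (X j @^-1` B j) = \bigcap_(j in [set` iota 0 N]) (X j @^-1` B j).
Proof.
move=> BT; apply/seteqP; split => w capB j _; first exact: capB.
have [jN|Nj] := ltnP j N.
  by apply: capB; rewrite /= mem_iota add0n jN.
by rewrite BT // => -[_]; rewrite ltnNge Nj.
Qed.

Lemma cylinder_prob N (B C : nat -> set (\bar R)) :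
  (forall j, measurable (B j)) -> (forall j, measurable (C j)) ->
  setT_off setT N B -> setT_off setT N C ->
  P (\bigcap_j (T j @^-1` B j) `&` \bigcap_j (Rs j @^-1` C j)) =
  (\prod_(j < N) P (T j @^-1` B j)) * \prod_(j < N) P (Rs j @^-1` C j).
Proof.
move=> mB mC BT CT.
rewrite (bigcap_preimage_iota T BT) (bigcap_preimage_iota Rs CT) indTR //.
rewrite indT ?iota_uniq // indR ?iota_uniq //.
by rewrite -!(big_mkord xpredT (fun j => P (_ j @^-1` _ j))) /index_iota subn0.
Qed.

(* Events depending on finitely many T j, j in IT, and R j, j in IR. *)
Definition cylinder (IT IR : set nat) : set (set Omega) :=
  [set A | exists N (B C : nat -> set (\bar R)),
     [/\ (forall j, measurable (B j)), (forall j, measurable (C j)),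
      setT_off IT N B, setT_off IR N C &
      A = \bigcap_j (T j @^-1` B j) `&` \bigcap_j (Rs j @^-1` C j)]].

Lemma cylinder_measurable IT IR : cylinder IT IR `<=` measurable.
Proof.
move=> _ [N [B [C [mB mC _ _ ->]]]].
by apply: measurableI; apply: bigcapT_measurable => j;
  rewrite -[X in measurable X]setTI; [exact: mT | exact: mRs].
Qed.

Lemma cylinderI (B C B' C' : nat -> set (\bar R)) :
  (\bigcap_j (T j @^-1` B j) `&` \bigcap_j (Rs j @^-1` C j)) `&`
  (\bigcap_j (T j @^-1` B' j) `&` \bigcap_j (Rs j @^-1` C' j)) =
  \bigcap_j (T j @^-1` (B j `&` B' j)) `&` \bigcap_j (Rs j @^-1` (C j `&` C' j)).
Proof.
apply/seteqP; split => w /=.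
  by move=> [[capB capC] [capB' capC']]; split => j _; split;
    [exact: capB | exact: capB' | exact: capC | exact: capC'].
by move=> [capBB' capCC']; split; split => j _;
  by [case: (capBB' j I) | case: (capCC' j I)].
Qed.

Lemma cylinder_setI_closed IT IR : setI_closed (cylinder IT IR).
Proof.
move=> _ _ [N [B [C [mB mC BT CT ->]]]] [N' [B' [C' [mB' mC' BT' CT' ->]]]].
have NM := leq_maxl N N'; have N'M := leq_maxr N N'.
exists (maxn N N'), (fun j => B j `&` B' j), (fun j => C j `&` C' j); split.
- by move=> j; exact: measurableI.
- by move=> j; exact: measurableI.
- by apply: setT_offI; [exact: setT_offW NM BT | exact: setT_offW N'M BT'].
- by apply: setT_offI; [exact: setT_offW NM CT | exact: setT_offW N'M CT'].
- exact: cylinderI.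
Qed.

Lemma cylinder_indep IT1 IR1 IT2 IR2 A A' :
  IT1 `&` IT2 = set0 -> IR1 `&` IR2 = set0 ->
  cylinder IT1 IR1 A -> cylinder IT2 IR2 A' -> P (A `&` A') = P A * P A'.
Proof.
move=> dT dR [N [B [C [mB mC BT CT ->]]]] [N' [B' [C' [mB' mC' BT' CT' ->]]]].
set M := maxn N N'.
have NM := leq_maxl N N'; have N'M := leq_maxr N N'.
have BM : setT_off setT M B by exact: setT_offW NM BT.
have CM : setT_off setT M C by exact: setT_offW NM CT.
have B'M : setT_off setT M B' by exact: setT_offW N'M BT'.
have C'M : setT_off setT M C' by exact: setT_offW N'M CT'.
have BB'M := setT_offI BM B'M; have CC'M := setT_offI CM C'M.
have mBB' j : measurable (B j `&` B' j) by exact: measurableI.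
have mCC' j : measurable (C j `&` C' j) by exact: measurableI.
rewrite cylinderI !(@cylinder_prob M) //.
rewrite (eq_bigr (fun j : 'I_M => P (T j @^-1` B j) * P (T j @^-1` B' j))); last first.
  by move=> j _; apply: probability_preimageI_setT; exact: setT_off_disjoint dT BT BT' j.
rewrite [\prod_(j < M) P (Rs j @^-1` _)](eq_bigr
    (fun j : 'I_M => P (Rs j @^-1` C j) * P (Rs j @^-1` C' j))); last first.
  by move=> j _; apply: probability_preimageI_setT; exact: setT_off_disjoint dR CT CT' j.
by rewrite !big_split /= muleACA.
Qed.

Definition cylinder_sigma IT IR := <<s cylinder IT IR >>.

Lemma cylinder_sigma_measurable IT IR : cylinder_sigma IT IR `<=` measurable.
Proof.
apply: smallest_sub; first exact: sigma_algebra_measurable.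
exact: cylinder_measurable.
Qed.

Lemma cylinder_sigma_indep IT1 IR1 IT2 IR2 A B :
  IT1 `&` IT2 = set0 -> IR1 `&` IR2 = set0 ->
  cylinder_sigma IT1 IR1 A -> cylinder_sigma IT2 IR2 B -> P (A `&` B) = P A * P B.
Proof.
(* Dynkin's pi-lambda theorem, once in each argument. *)
move=> dT dR sA sB.
have cylinder_indep_sigma B0 : cylinder IT2 IR2 B0 ->
    forall A0, cylinder_sigma IT1 IR1 A0 -> P (A0 `&` B0) = P A0 * P B0.
  move=> cB0; have mB0 := cylinder_measurable cB0.
  suff : cylinder_sigma IT1 IR1 `<=` [set A | measurable A /\ P (B0 `&` A) = P B0 * P A].
    by move=> sub A0 /sub [_]; rewrite setIC muleC.
  rewrite /cylinder_sigma -setI_closed_g_dynkin_g_sigma_algebra;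
    last exact: cylinder_setI_closed.
  apply: smallest_sub; first exact: indep_dynkin.
  move=> A0 cA0; split; first exact: cylinder_measurable cA0.
  by rewrite setIC muleC; exact: cylinder_indep dT dR cA0 cB0.
suff : cylinder_sigma IT2 IR2 `<=` [set B | measurable B /\ P (A `&` B) = P A * P B].
  by move=> sub; case: (sub _ sB).
rewrite /cylinder_sigma -setI_closed_g_dynkin_g_sigma_algebra;
  last exact: cylinder_setI_closed.
apply: smallest_sub; first exact/indep_dynkin/(cylinder_sigma_measurable sA).
move=> B0 cB0; split; first exact: cylinder_measurable cB0.
exact: cylinder_indep_sigma.
Qed.

Local Notation cmeasurable IT IR f :=
  (@measurable_fun _ _ (g_sigma_algebraType (cylinder IT IR)) _ setT f).

Lemma cmeasurable_preimage IT IR d' (X : measurableType d') (Z : Omega -> X) :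
  cmeasurable IT IR Z -> forall A, measurable A -> cylinder_sigma IT IR (Z @^-1` A).
Proof. by move=> mZ A mA; have := mZ measurableT A mA; rewrite setTI. Qed.

Lemma cmeasurableW IT IR d' (X : measurableType d') (Z : Omega -> X) :
  cmeasurable IT IR Z -> measurable_fun setT Z.
Proof.
move=> mZ _ A mA; rewrite setTI.
by apply: cylinder_sigma_measurable; exact: cmeasurable_preimage mZ _ mA.
Qed.

Lemma cmeasurable_T IT IR j : IT j -> cmeasurable IT IR (T j).
Proof.
move=> ITj _ U mU; rewrite setTI; apply: sub_sigma_algebra.
exists j.+1, (fun i => if i == j then U else setT), (fun _ => setT); split => //.
- by move=> i; case: ifP.
- move=> i notITi; case: eqP => // eij; exfalso.
  by apply: notITi; rewrite eij ltnSn.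
apply/seteqP; split => w /=.
  by move=> Uw; split => i _ //=; case: eqP => [->|].
by move=> [capB _]; have := capB j I; rewrite /= eqxx.
Qed.

Lemma cmeasurable_Rs IT IR j : IR j -> cmeasurable IT IR (Rs j).
Proof.
move=> IRj _ U mU; rewrite setTI; apply: sub_sigma_algebra.
exists j.+1, (fun _ => setT), (fun i => if i == j then U else setT); split => //.
- by move=> i; case: ifP.
- move=> i notIRi; case: eqP => // eij; exfalso.
  by apply: notIRi; rewrite eij ltnSn.
apply/seteqP; split => w /=.
  by move=> Uw; split => i _ //=; case: eqP => [->|].
by move=> [_ capC]; have := capC j I; rewrite /= eqxx.
Qed.

Local Notation cmeasurable_set IT IR A :=
  (@measurable _ (g_sigma_algebraType (cylinder IT IR)) A).

Lemma stop_event_uniq j k w :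
  stop_event T Rs j w -> stop_event T Rs k w -> j = k.
Proof.
move=> [Rj Tj] [Rk Tk]; case: (ltngtP j k) => // jk; exfalso.
  by move: (Rk j jk); rewrite ltNge Tj.
by move: (Rj k jk); rewrite ltNge Tk.
Qed.

Definition Rsum n w := \sum_(l < n) Rs l w.

Lemma Ttilde_stop k w : stop_event T Rs k w -> Ttilde T Rs w = Rsum k w + T k w.
Proof.
move=> stopk; rewrite /Ttilde; apply: lim_near_cst => //.
exists k.+1 => // n /= kn.
rewrite (bigD1_seq k) /=; first last.
- by rewrite /index_iota subn0 iota_uniq.
- by rewrite mem_index_iota.
rewrite [X in _ + X = _]big1 ?adde0; first by rewrite indicE (mem_set stopk) mul1e.
move=> j jk; rewrite indicE memNset ?mul0e // => stopj.
by move/eqP: jk; apply; exact: stop_event_uniq stopj stopk.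
Qed.

Lemma Ttilde_nostop w : (forall k, ~ stop_event T Rs k w) -> Ttilde T Rs w = 0.
Proof.
move=> nostop; rewrite /Ttilde; apply: lim_near_cst => //.
by exists 0%N => // n _; rewrite big1 // => k _; rewrite indicE memNset ?mul0e.
Qed.

Definition survive n : set Omega := [set w | forall l, (l < n)%N -> Rs l w < T l w].

Lemma surviveS n w : survive n.+1 w <-> survive n w /\ Rs n w < T n w.
Proof.
split=> [surv|[surv RTn] l]; first by split=> [l ln|]; apply: surv; rewrite ltnS // ltnW.
by rewrite ltnS leq_eqVlt => /orP[/eqP ->|]; [exact: RTn | exact: surv].
Qed.

Lemma survive_cmeasurable IT IR n : (forall l, (l < n)%N -> IT l /\ IR l) ->
  cmeasurable_set IT IR (survive n).
Proof.
move=> ITR.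
have -> : survive n = \bigcap_(l in [set l | (l < n)%N]) [set w | Rs l w < T l w].
  by apply/seteqP; split => w /= surv l ln; exact: surv.
apply: bigcap_measurableType => l ln.
by apply: measurable_set_lte; [apply: cmeasurable_Rs | apply: cmeasurable_T];
  case: (ITR l ln).
Qed.

Lemma measurable_survive n : measurable (survive n).
Proof.
suff : cmeasurable_set setT setT (survive n) by exact: cylinder_sigma_measurable.
exact: survive_cmeasurable.
Qed.

Lemma Rsum_cmeasurable IT IR n : (forall l, (l < n)%N -> IR l) ->
  cmeasurable IT IR (Rsum n).
Proof.
elim: n => [|n IHn] IRn; rewrite /Rsum.
  by under eq_fun do rewrite big_ord0; exact: measurable_cst.
under eq_fun do rewrite big_ord_recr /=.
apply: emeasurable_funD; last by apply: cmeasurable_Rs; exact: IRn.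
by apply: IHn => l ln; apply: IRn; rewrite ltnS ltnW.
Qed.

Lemma probability_survive n : P (survive n) = \prod_(k < n) P [set w | Rs k w < T k w].
Proof.
elim: n => [|n IHn].
  rewrite big_ord0 (_ : survive 0 = setT) ?probability_setT //.
  by apply/seteqP; split => w // _ l; rewrite ltn0.
rewrite big_ord_recr /= -IHn.
rewrite (_ : survive n.+1 = survive n `&` [set w | Rs n w < T n w]); last first.
  by apply/seteqP; split => w /surviveS.
have disj : [set l | (l < n)%N] `&` [set n] = set0.
  by apply/seteqP; split => // l [/= ln eln]; rewrite eln ltnn in ln.
apply: (cylinder_sigma_indep disj disj).
- exact: survive_cmeasurable.
- suff : cmeasurable_set [set n] [set n] [set w | Rs n w < T n w] by [].
  by apply: measurable_set_lte; [exact: cmeasurable_Rs | exact: cmeasurable_T].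
Qed.

Section renewal.
Context (mu : probability (\bar R) R) (t : R).
Hypothesis mu_neg : mu [set x : \bar R | x < 0] = 0.
Hypothesis lawT : forall k (A : set (\bar R)), measurable A -> P (T k @^-1` A) = mu A.
Hypothesis Rs_ge0 : forall k w, 0 <= Rs k w.
Hypothesis t_ge0 : (0 <= t)%R.

Definition survive_above n := survive n `&` [set w | t%:E < Rsum n w + T n w].
Definition stop_above n := stop_event T Rs n `&` [set w | t%:E < Rsum n w + T n w].
Definition pass_above n :=
  (survive n `&` [set w | Rs n w < T n w]) `&` [set w | t%:E < Rsum n w + T n w].

Lemma measurable_survive_above n : measurable (survive_above n).
Proof.
suff : cmeasurable_set setT setT (survive_above n) by exact: cylinder_sigma_measurable.
apply: measurableI; first exact: survive_cmeasurable.
apply: measurable_set_lte; first exact: measurable_cst.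
by apply: emeasurable_funD; [exact: Rsum_cmeasurable | exact: cmeasurable_T].
Qed.

Lemma measurable_stop_above n : measurable (stop_above n).
Proof.
suff : cmeasurable_set setT setT (stop_above n) by exact: cylinder_sigma_measurable.
apply: measurableI.
  apply: measurableI; first exact: survive_cmeasurable.
  by apply: measurable_set_lee; [exact: cmeasurable_T | exact: cmeasurable_Rs].
apply: measurable_set_lte; first exact: measurable_cst.
by apply: emeasurable_funD; [exact: Rsum_cmeasurable | exact: cmeasurable_T].
Qed.

Lemma measurable_pass_above n : measurable (pass_above n).
Proof.
suff : cmeasurable_set setT setT (pass_above n) by exact: cylinder_sigma_measurable.
apply: measurableI.
  apply: measurableI; first exact: survive_cmeasurable.
  by apply: measurable_set_lte; [exact: cmeasurable_Rs | exact: cmeasurable_T].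
apply: measurable_set_lte; first exact: measurable_cst.
by apply: emeasurable_funD; [exact: Rsum_cmeasurable | exact: cmeasurable_T].
Qed.

Lemma probability_survive_above0 : P (survive_above 0) = Fbar mu t.
Proof.
rewrite /Fbar -(lawT 0); last first.
  by apply: measurable_set_lte; [exact: measurable_cst | exact: measurable_id].
congr (P _); apply/seteqP; split => w /=.
  by case=> _ /=; rewrite /Rsum big_ord0 add0e.
move=> tT; split=> [l|]; first by rewrite ltn0.
by rewrite /= /Rsum big_ord0 add0e.
Qed.

Lemma probability_survive_above_split n :
  P (survive_above n) = P (stop_above n) + P (pass_above n).
Proof.
rewrite -measureU; [|exact: measurable_stop_above|exact: measurable_pass_above|].
  congr (P _); apply/seteqP; split => w.
    by move=> [surv above]; have [TR|RT] := leP (T n w) (Rs n w); [left | right].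
  by move=> [[[surv _] above]|[[surv _] above]].
apply/seteqP; split => // w [[[_ TR] _] [[_ RT] _]].
by move: RT; rewrite /= ltNge TR.
Qed.

Lemma probability_T_consecutive n A B : measurable A -> measurable B ->
  P (T n @^-1` A `&` T n.+1 @^-1` B) = mu A * mu B.
Proof.
move=> mA mB.
have Sn_neq : (n.+1 == n) = false by rewrite gtn_eqF.
pose C j := if j == n then A else B.
have mC j : measurable (C j) by rewrite /C; case: ifP.
have uniq_nSn : uniq [:: n; n.+1] by rewrite /= inE ltn_eqF.
have := indT uniq_nSn mC.
rewrite big_cons big_cons big_nil /C /= eqxx Sn_neq mule1 !lawT // => <-.
congr (P _); apply/seteqP; split => w /=.
  by move=> [Aw Bw] j /=; rewrite !inE => /orP[] /eqP ->; rewrite ?eqxx ?Sn_neq.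
move=> capC; split; first by have := capC n (mem_head _ _); rewrite /C eqxx.
by have := capC n.+1 (mem_last n [:: n.+1]); rewrite /C Sn_neq.
Qed.

(* All the past that round n depends on; it is independent of next_lifetimes n. *)
Definition step_state n w : \bar R * (\bar R * \bar R) :=
  ((\1_(survive n) w)%:E, (Rsum n w, Rs n w)).
Definition next_lifetimes n w : \bar R * \bar R := (T n w, T n.+1 w).

Local Notation step_pair n := (fun w => (step_state n w, next_lifetimes n w)).

(* For p = (step_state n w, next_lifetimes n w) = ((e, (s, r)), (x, y)). *)
Definition above_next : set ((\bar R * (\bar R * \bar R)) * (\bar R * \bar R)) :=
  [set p | p.1.1 = 1 /\ 0 <= p.1.2.1 /\ 0 <= p.1.2.2 /\ p.1.2.2 < p.2.1 /\
           t%:E < p.1.2.1 + p.1.2.2 + p.2.2].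
Definition above_now : set ((\bar R * (\bar R * \bar R)) * (\bar R * \bar R)) :=
  [set p | p.1.1 = 1 /\ 0 <= p.1.2.1 /\ 0 <= p.1.2.2 /\ p.1.2.2 < p.2.1 /\
           t%:E < p.1.2.1 + p.2.1].

Lemma measurable_above_next : measurable above_next.
Proof.
repeat apply: measurableI;
  first [apply: measurable_set_eqe | apply: measurable_set_lee | apply: measurable_set_lte];
  measurable_coordinates.
Qed.

Lemma measurable_above_now : measurable above_now.
Proof.
repeat apply: measurableI;
  first [apply: measurable_set_eqe | apply: measurable_set_lee | apply: measurable_set_lte];
  measurable_coordinates.
Qed.

Lemma EFin_indic_eq1 (A : set Omega) w : ((\1_A w)%:E = 1 :> \bar R) <-> A w.
Proof.
have [Aw|nAw] := pselect (A w); first by rewrite indicE (mem_set Aw).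
rewrite indicE memNset //=; split => // -[] /eqP.
by rewrite eq_sym oner_eq0.
Qed.

Lemma Rsum_ge0 n w : 0 <= Rsum n w.
Proof. by apply: sume_ge0 => l _; exact: Rs_ge0. Qed.

Lemma survive_aboveS_preimage n : survive_above n.+1 = step_pair n @^-1` above_next.
Proof.
apply/seteqP; split => w /=.
  move=> [/surviveS [surv RT] /=]; rewrite /Rsum big_ord_recr /= => above.
  split; first exact/EFin_indic_eq1.
  by split; [exact: Rsum_ge0 | split; [exact: Rs_ge0 | split]].
move=> [/EFin_indic_eq1 surv [_ [_ [RT above]]]]; split; first exact/surviveS.
by rewrite /= /Rsum big_ord_recr.
Qed.

Lemma pass_above_preimage n : pass_above n = step_pair n @^-1` above_now.
Proof.
apply/seteqP; split => w /=.
  move=> [[surv RT] above]; split; first exact/EFin_indic_eq1.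
  by split; [exact: Rsum_ge0 | split; [exact: Rs_ge0 | split]].
by move=> [/EFin_indic_eq1 surv [_ [_ [RT above]]]].
Qed.

Lemma Fbar_split_step_sections n z :
  Fbar_split mu (P (next_lifetimes n @^-1` ((fun y => (z, y)) @^-1` above_next)))
                (P (next_lifetimes n @^-1` ((fun y => (z, y)) @^-1` above_now))).
Proof.
case: z => e [s r].
have [[e1 [s0 r0]]|not_state] := pselect (e = 1 /\ 0 <= s /\ 0 <= r); last first.
  left; rewrite [X in P X](_ : _ = set0); last first.
    by apply/seteqP; split => w // [e1 [s0 [r0 _]]]; exfalso; exact: not_state.
  rewrite [X in _ = P X](_ : _ = set0) //.
  by apply/seteqP; split => w // [e1 [s0 [r0 _]]]; exfalso; exact: not_state.
have mgt : measurable [set x : \bar R | r < x].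
  by apply: measurable_set_lte; measurable_coordinates.
have mabove : measurable [set y : \bar R | t%:E < s + r + y].
  by apply: measurable_set_lte; measurable_coordinates.
have mboth : measurable [set x : \bar R | r < x /\ t%:E < s + x].
  by apply: measurableI; apply: measurable_set_lte; measurable_coordinates.
rewrite (_ : next_lifetimes n @^-1` (_ @^-1` above_next) =
    T n @^-1` [set x | r < x] `&` T n.+1 @^-1` [set y | t%:E < s + r + y]); last first.
  apply/seteqP; split => w /=; first by case=> _ [_ [_ []]].
  by case=> rx above; split; [|split; [|split; [|split]]].
rewrite (_ : next_lifetimes n @^-1` (_ @^-1` above_now) =
    T n @^-1` [set x | r < x /\ t%:E < s + x]); last first.
  apply/seteqP; split => w /=; first by case=> _ [_ [_ []]].
  by case=> rx above; split; [|split; [|split; [|split]]].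
by rewrite probability_T_consecutive // lawT //; exact: Fbar_split_tails.
Qed.

Lemma step_state_cmeasurable n :
  cmeasurable [set l | (l < n)%N] [set l | (l <= n)%N] (step_state n).
Proof.
apply: measurable_fun_pair.
  apply/measurable_EFinP; apply: measurable_indic.
  by apply: survive_cmeasurable => l ln; split => //; rewrite /= ltnW.
apply: measurable_fun_pair; last by apply: cmeasurable_Rs; rewrite /=.
by apply: Rsum_cmeasurable => l ln; rewrite /= ltnW.
Qed.

Lemma next_lifetimes_cmeasurable n :
  cmeasurable [set l | l = n \/ l = n.+1] set0 (next_lifetimes n).
Proof. by apply: measurable_fun_pair; apply: cmeasurable_T; [left | right]. Qed.

Lemma step_state_next_lifetimes_indep n A B : measurable A -> measurable B ->
  P (step_state n @^-1` A `&` next_lifetimes n @^-1` B) =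
  P (step_state n @^-1` A) * P (next_lifetimes n @^-1` B).
Proof.
move=> mA mB.
have sA := cmeasurable_preimage (step_state_cmeasurable (n := n)) mA.
have sB := cmeasurable_preimage (next_lifetimes_cmeasurable (n := n)) mB.
apply: (cylinder_sigma_indep _ _ sA sB); last exact: setI0.
apply/seteqP; split => // l [/= ln [] eln]; move: ln; rewrite eln ?ltnn //.
by rewrite ltnNge leqnSn.
Qed.

Lemma le_survive_aboveS_pass n :
  supermultiplicative mu -> P (survive_above n.+1) <= P (pass_above n).
Proof.
move=> super; rewrite survive_aboveS_preimage pass_above_preimage.
apply: (le_indep_pair_preimage (cmeasurableW (step_state_cmeasurable (n := n)))
  (cmeasurableW (next_lifetimes_cmeasurable (n := n))) (@step_state_next_lifetimes_indep n)
  measurable_above_next measurable_above_now) => z.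
exact: Fbar_split_super super (Fbar_split_step_sections n z).
Qed.

Lemma le_pass_survive_aboveS n :
  submultiplicative mu -> P (pass_above n) <= P (survive_above n.+1).
Proof.
move=> sub; rewrite survive_aboveS_preimage pass_above_preimage.
apply: (le_indep_pair_preimage (cmeasurableW (step_state_cmeasurable (n := n)))
  (cmeasurableW (next_lifetimes_cmeasurable (n := n))) (@step_state_next_lifetimes_indep n)
  measurable_above_now measurable_above_next) => z.
exact: Fbar_split_sub sub (Fbar_split_step_sections n z).
Qed.

Definition tail_approx n := \sum_(k < n) P (stop_above k) + P (survive_above n).

Lemma tail_approx_split n : tail_approx n =
  \sum_(k < n) P (stop_above k) + (P (stop_above n) + P (pass_above n)).
Proof. by rewrite /tail_approx probability_survive_above_split. Qed.

Lemma tail_approx_le_Fbar n : supermultiplicative mu -> tail_approx n <= Fbar mu t.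
Proof.
move=> super; elim: n => [|n IHn].
  by rewrite /tail_approx big_ord0 add0e probability_survive_above0.
apply: le_trans IHn; rewrite [leRHS]tail_approx_split /tail_approx big_ord_recr /= -addeA.
by apply: leeD2l; apply: leeD2l; exact: le_survive_aboveS_pass.
Qed.

Lemma Fbar_le_tail_approx n : submultiplicative mu -> Fbar mu t <= tail_approx n.
Proof.
move=> sub; elim: n => [|n IHn].
  by rewrite /tail_approx big_ord0 add0e probability_survive_above0.
apply: le_trans IHn _; rewrite [leLHS]tail_approx_split /tail_approx big_ord_recr /= -addeA.
by apply: leeD2l; apply: leeD2l; exact: le_pass_survive_aboveS.
Qed.

Lemma Ttilde_above_bigcup : [set w | t%:E < Ttilde T Rs w] = \bigcup_k stop_above k.
Proof.
apply/seteqP; split => w /=; last first.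
  by move=> [k _ [stopk above]]; rewrite (Ttilde_stop stopk).
move=> above; have [[k stopk]|nostop] := pselect (exists k, stop_event T Rs k w).
  by exists k => //; split => //=; rewrite -(Ttilde_stop stopk).
move: above; rewrite Ttilde_nostop => [|k stopk]; last by apply: nostop; exists k.
by rewrite lte_fin ltNge t_ge0.
Qed.

Lemma cvg_stop_above :
  (fun n => \sum_(0 <= k < n) P (stop_above k)) @ \oo --> P [set w | t%:E < Ttilde T Rs w].
Proof.
rewrite Ttilde_above_bigcup; apply: measure_sigma_additive measurable_stop_above _.
by move=> i j _ _ [w [[stopi _] [stopj _]]]; exact: stop_event_uniq stopi stopj.
Qed.

Lemma Ttilde_tail_le_Fbar :
  supermultiplicative mu -> P [set w | t%:E < Ttilde T Rs w] <= Fbar mu t.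
Proof.
move=> super; rewrite -(cvg_lim _ cvg_stop_above) //.
apply: lime_le; first by apply/cvg_ex; eexists; exact: cvg_stop_above.
exists 0%N => // n _ /=; rewrite big_mkord.
by apply: le_trans (tail_approx_le_Fbar n super); apply: leeDl.
Qed.

Lemma Fbar_le_Ttilde_tail : submultiplicative mu ->
  (fun n => \prod_(k < n) P [set w | Rs k w < T k w]) @ \oo --> 0 ->
  Fbar mu t <= P [set w | t%:E < Ttilde T Rs w].
Proof.
move=> sub prod0.
have survive0 : (fun n => P (survive n)) @ \oo --> 0.
  by rewrite (funext probability_survive).
have cvg_upper : (fun n => \sum_(0 <= k < n) P (stop_above k) + P (survive n)) @ \oo -->
    P [set w | t%:E < Ttilde T Rs w].
  rewrite -[X in _ --> X]adde0.
  by apply: cvgeD survive0; [rewrite fin_num_adde_defl | exact: cvg_stop_above].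
rewrite -(cvg_lim _ cvg_upper) //.
apply: lime_ge; first by apply/cvg_ex; eexists; exact: cvg_upper.
exists 0%N => // n _ /=; rewrite big_mkord.
apply: le_trans (Fbar_le_tail_approx n sub) _; apply: leeD2l.
apply: le_measure; rewrite ?inE; [exact: measurable_survive_above | | by move=> w []].
exact: measurable_survive.
Qed.

End renewal.
End cylinders.

Theorem mainTheorem12 (R : realType) (d : measure_display) (Omega : measurableType d)
  (P : probability Omega R) (mu : probability (\bar R) R)
  (T Rs : nat -> Omega -> \bar R) :
  mu [set x : \bar R | x < 0] = 0 ->
  0 < mu [set x : \bar R | 0 < x] ->
  ereal_inf (msupp mu) = 0 ->
  (forall k, measurable_fun setT (T k)) ->
  (forall k w, 0 <= T k w) ->
  (forall k (A : set (\bar R)), measurable A -> P (T k @^-1` A) = mu A) ->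
  mutual_indep P T ->
  (forall k, measurable_fun setT (Rs k)) ->
  (forall k w, 0 <= Rs k w) ->
  mutual_indep P Rs ->
  indep_seqs P T Rs ->
  (fun n => \prod_(k < n) P [set w | Rs k w < T k w]) @ \oo --> 0 ->
  (supermultiplicative mu ->
     forall t : R, (0 <= t)%R -> P [set w | t%:E < Ttilde T Rs w] <= Fbar mu t)
  /\
  (submultiplicative mu ->
     {ae P, forall w, (fun k => \sum_(l < k) Rs l w) @ \oo --> +oo} ->
     forall t : R, (0 <= t)%R -> Fbar mu t <= P [set w | t%:E < Ttilde T Rs w]).
Proof.
move=> mu_neg _ _ mT _ lawT indT mRs Rs_ge0 indR indTR prod0.
(* Neither T k >= 0 (a.s. implied by mu_neg), nor the support assumptions on mu,
   nor the a.s. divergence of the partial sums of Rs is needed: prod0 alone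
   forces the walk to stop almost surely. *)
split=> [super t t_ge0 | sub _ t t_ge0].
- exact: Ttilde_tail_le_Fbar.
- exact: Fbar_le_Ttilde_tail.
Qed.
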